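(* Let $G$ be a connected Lie group with Lie algebra $\mathfrak{su}(2)\oplus\mathbb{R}$ having basis $E_1,E_2,E_3,E_4$ with $[E_1,E_2]=E_3$, $[E_2,E_3]=E_1$, $[E_3,E_1]=E_2$, $[E_i,E_4]=0$ ($i=1,2,3$). For $(\alpha_1,\alpha_2,\alpha_3)\in\mathbb{R}^3$, $\beta,t\in\mathbb{R}$ define $$\gamma_1(\alpha_1,\alpha_2,\alpha_3,\beta;t)=\exp\bigl(t(\alpha_1E_1+\alpha_2(E_4-E_3)+\alpha_3E_2+\beta E_3)\bigr)\exp(-t\beta E_3),$$ $$\gamma_2(\alpha_1,\alpha_2,\alpha_3,\beta;t)=\exp\bigl(t(\alpha_1E_1+\alpha_2E_4+\alpha_3E_2+\beta E_3)\bigr)\exp(-t\beta E_3).$$ Then for all $(\alpha_1,\alpha_2,\alpha_3)\in\mathbb{S}^2$, $\beta\in\mathbb{R}$ and $t\in\mathbb{R}$, $$\gamma_1(\alpha_1,\alpha_2,\alpha_3,\beta;t)=\gamma_2(\alpha_1,\alpha_2,\alpha_3,\beta-\alpha_2;t)\exp(-t\alpha_2E_3).$$ *)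

From HB Require Import structures.
From mathcomp Require Import all_boot all_order all_algebra.
From mathcomp Require Import reals.
Set Implicit Arguments. Unset Strict Implicit. Unset Printing Implicit Defensive.
Import Order.TTheory GRing.Theory Num.Theory.
Local Open Scope ring_scope.

(* The Lie algebra su(2) (+) R, in coordinates w.r.t. the basis E1..E4:
   an element is a row vector x = x1 E1 + x2 E2 + x3 E3 + x4 E4 in 'rV[R]_4
   (index 0 <-> E1, ..., index 3 <-> E4). *)
Section LieAlg.
Variable R : realType.

Definition E1 : 'rV[R]_4 := \row_(j < 4) (j == 0%N :> nat)%:R.
Definition E2 : 'rV[R]_4 := \row_(j < 4) (j == 1%N :> nat)%:R.
Definition E3 : 'rV[R]_4 := \row_(j < 4) (j == 2%N :> nat)%:R.
Definition E4 : 'rV[R]_4 := \row_(j < 4) (j == 3%N :> nat)%:R.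

Definition su2R_bracket (x y : 'rV[R]_4) : 'rV[R]_4 :=
  (x 0 1 * y 0 2 - x 0 2 * y 0 1) *: E1 +
  (x 0 2 * y 0 0 - x 0 0 * y 0 2) *: E2 +
  (x 0 0 * y 0 1 - x 0 1 * y 0 0) *: E3.
End LieAlg.

(* Only the
   algebraic data is recorded: group axioms, and the defining property of
   the Lie exponential that t |-> exp(tX) is a one-parameter subgroup. *)
Record LieGroupExp (R : realType) := {
  carrier :> Type;
  gmul : carrier -> carrier -> carrier;
  gone : carrier;
  ginv : carrier -> carrier;
  gmulA : forall x y z, gmul x (gmul y z) = gmul (gmul x y) z;
  gmul1g : forall x, gmul gone x = x;
  gmulg1 : forall x, gmul x gone = x;
  gmulVg : forall x, gmul (ginv x) x = gone;
  gmulgV : forall x, gmul x (ginv x) = gone;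
  lexp : 'rV[R]_4 -> carrier;
  lexp_one_param : forall (X : 'rV[R]_4) (s t : R),
      lexp ((s + t) *: X) = gmul (lexp (s *: X)) (lexp (t *: X))
}.

Section Curves.
Variables (R : realType) (G : LieGroupExp R).

Definition gamma1 (a1 a2 a3 b t : R) : G :=
  gmul (lexp G (t *: (a1 *: E1 R + a2 *: (E4 R - E3 R) + a3 *: E2 R + b *: E3 R)))
         (lexp G ((- (t * b)) *: E3 R)).

Definition gamma2 (a1 a2 a3 b t : R) : G :=
  gmul (lexp G (t *: (a1 *: E1 R + a2 *: E4 R + a3 *: E2 R + b *: E3 R)))
         (lexp G ((- (t * b)) *: E3 R)).
End Curves.

From mathcomp Require Import all_boot all_order all_algebra.
From mathcomp Require Import reals.
Import Order.TTheory GRing.Theory Num.Theory.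
Local Open Scope ring_scope.

(* Both sides are exp(t Y) exp(-t b E3) with the same generator
   Y = a1 E1 + a2 E4 + a3 E2 + (b - a2) E3, once the two exponentials along
   E3 on the right-hand side are merged inside the one-parameter subgroup
   s |-> exp(s E3). *)

Lemma scale_shift_along (R : pzRingType) (V : lmodType R) (a b : R) (p q x y : V) :
  p + a *: (y - x) + q + b *: x = p + a *: y + q + (b - a) *: x.
Proof.
rewrite scalerBr scalerBl -!addrA; do 2 congr (_ + _).
by rewrite addrCA [- _ + _]addrC.
Qed.

Theorem proposition1 (R : realType) (G : LieGroupExp R) (a1 a2 a3 b t : R) :
  a1 ^+ 2 + a2 ^+ 2 + a3 ^+ 2 = 1 ->
  gamma1 G a1 a2 a3 b t =
  gmul (gamma2 G a1 a2 a3 (b - a2) t) (lexp G ((- (t * a2)) *: E3 R)).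
Proof.
move=> _; rewrite /gamma1 /gamma2 -gmulA -lexp_one_param scale_shift_along.
by congr (gmul _ (lexp G (_ *: _))); rewrite -opprD -mulrDr subrK.
Qed.
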